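(* Let $\mathscr X\subset\mathbb R^d$ be compact with $\mathrm{vol}(\mathscr X)>0$, and let $\|\cdot\|$ be any norm on $\mathbb R^d$. Let $\mathbf x_1,\mathbf x_2,\ldots$ be any sequence of pairwise distinct points of $\mathscr X$, and let $\mathbf X_n=\{\mathbf x_1,\ldots,\mathbf x_n\}$. Then $$\limsup_{n\to\infty}\mathsf{MR}(\mathbf X_n)\ge 2.$$ In particular, the uniformity constant satisfies $\mathsf{MR}(\mathbf X_\infty)\ge 2$ for every such sequence $\mathbf X_\infty=\{\mathbf x_1,\mathbf x_2,\ldots\}\subset\mathscr X$.
   Context: For a design (finite set of distinct points) $\mathbf X_n=\{\mathbf x_1,\ldots,\mathbf x_n\}\subset\mathscr X$: - the fill distance is $\mathsf{CR}(\mathbf X_n)=\mathsf{CR}_{\mathscr X}(\mathbf X_n)=\sup_{\mathbf x\in\mathscr X}\min_{\mathbf x_i\in\mathbf X_n}\|\mathbf x-\mathbf x_i\|$; - the separation radius is $\mathsf{SR}(\mathbf X_n)=\tfrac12\min_{\mathbf x_i\neq\mathbf x_j\in\mathbf X_n}\|\mathbf x_i-\mathbf x_j\|$ for $n\ge2$; - the mesh-ratio is $\mathsf{MR}(\mathbf X_n)=\mathsf{CR}(\mathbf X_n)/\mathsf{SR}(\mathbf X_n)$ for $n\ge 2$. The uniformity constant of the sequence $\mathbf X_\infty$ (equivalently of the nested designs $\{\mathbf X_n\}$) is $\mathsf{MR}(\mathbf X_\infty)=\sup_{n\ge2}\mathsf{MR}(\mathbf X_n)$ (possibly $+\infty$).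 *)

From HB Require Import structures.
From mathcomp Require Import all_boot all_order all_algebra.
From mathcomp Require Import all_classical all_reals all_analysis.
Set Implicit Arguments. Unset Strict Implicit. Unset Printing Implicit Defensive.
Import Order.TTheory GRing.Theory Num.Theory.
Import numFieldNormedType.Exports.
Local Open Scope classical_set_scope.
Local Open Scope ring_scope.

Section Defs.
Variables (R : realType) (d : nat).

Definition is_norm (N : 'rV[R]_d -> R) : Prop :=
  [/\ forall x, N x = 0 -> x = 0,
      forall (a : R) x, N (a *: x) = `|a| * N x
    & forall x y, N (x + y) <= N x + N y].

Definition box (a b : 'rV[R]_d) : set 'rV[R]_d :=
  [set x | forall i : 'I_d, a 0 i <= x 0 i <= b 0 i].
Definition box_vol (a b : 'rV[R]_d) : R :=
  \prod_(i < d) Num.max (b 0 i - a 0 i) 0.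
Definition lebesgue_outer (X : set 'rV[R]_d) : \bar R :=
  ereal_inf [set s | exists a b : nat -> 'rV[R]_d,
     X `<=` \bigcup_k box (a k) (b k) /\
     s = (\sum_(0 <= k <oo) (box_vol (a k) (b k))%:E)%E].

(* Designs X_n = {xs 0, ..., xs (n-1)} (the paper's x_1,...,x_n). *)
Variables (N : 'rV[R]_d -> R) (X : set 'rV[R]_d) (xs : nat -> 'rV[R]_d).

(* min_{x_i in X_n} ||x - x_i||  (meaningful for n >= 1) *)
Definition dist_design (n : nat) (x : 'rV[R]_d) : R :=
  \big[Order.min/N (x - xs 0)]_(i < n) N (x - xs i).

Definition fill_distance (n : nat) : R :=
  sup [set dist_design n x | x in X].

(* separation radius SR(X_n) = 1/2 min_{i <> j} ||x_i - x_j||  (n >= 2) *)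
Definition separation_radius (n : nat) : R :=
  2^-1 * \big[Order.min/N (xs 0 - xs 1)]_(i < n)
           \big[Order.min/N (xs 0 - xs 1)]_(j < n | i != j) N (xs i - xs j).

Definition mesh_ratio (n : nat) : R := fill_distance n / separation_radius n.

End Defs.

(* If the mesh ratio of X_(n+1) is at most r, then, since the new point lies
   within the fill distance h_n of X_n, its separation radius is at most h_n / 2,
   so h_(n+1) <= (r / 2) h_n.  Were the mesh ratio eventually at most some
   r < 2, the fill distance would thus decay like rho^n with rho < 1.  But X is
   covered by the n sup-norm cubes of half-side h_n / c centred at the design
   points (c comparing the given norm with the sup norm), so its outer measure
   would be O(n rho^n) -> 0, contradicting vol(X) > 0. *)
From HB Require Import structures.
From mathcomp Require Import all_boot all_order all_algebra.
From mathcomp Require Import all_classical all_reals all_analysis.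
From mathcomp Require Import lra ring.
Import Order.TTheory GRing.Theory Num.Theory.
Import numFieldNormedType.Exports.
Local Open Scope classical_set_scope.
Local Open Scope ring_scope.
Set Implicit Arguments. Unset Strict Implicit. Unset Printing Implicit Defensive.

Lemma mx_coord_le_norm (K : realDomainType) m n (x : 'M[K]_(m, n)) i j :
  `|x i j| <= `|x|.
Proof.
rewrite [leRHS]/Num.norm /= mx_normrE.
exact: (le_bigmax _ (fun ij : 'I_m * 'I_n => `|x ij.1 ij.2|) (i, j)).
Qed.

Section NormEquivalence.
Variables (R : realType) (d : nat) (N : 'rV[R]_d -> R).
Hypothesis normN : is_norm N.

Lemma normN0 : N 0 = 0.
Proof. by case: normN => _ NZ _; rewrite -(scale0r 0) NZ normr0 mul0r. Qed.

Lemma normNN x : N (- x) = N x.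
Proof. by case: normN => _ NZ _; rewrite -scaleN1r NZ normrN normr1 mul1r. Qed.

Lemma normN_ge0 x : 0 <= N x.
Proof.
case: normN => _ _ ND; have := ND x (- x).
by rewrite subrr normN0 normNN; lra.
Qed.

Lemma normN_gt0 x : x != 0 -> 0 < N x.
Proof.
case: normN => N_eq0 _ _ x0; rewrite lt_neqAle normN_ge0 andbT eq_sym.
by apply: contra x0 => /eqP/N_eq0 ->.
Qed.

Lemma distN_sym x y : N (x - y) = N (y - x).
Proof. by rewrite -normNN opprB. Qed.

Lemma normN_sum_le (F : 'I_d -> 'rV[R]_d) : N (\sum_j F j) <= \sum_j N (F j).
Proof.
case: normN => _ _ ND; elim/big_rec2: _ => [|j s1 s2 _ IH]; first by rewrite normN0.
by apply: le_trans (ND _ _) _; rewrite lerD2l.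
Qed.

Lemma normN_le_mx_norm : exists2 C, 0 <= C & forall x, N x <= C * `|x|.
Proof.
case: normN => _ NZ _.
exists (\sum_j N (delta_mx 0 j)) => [|x]; first by apply: sumr_ge0 => j _; exact: normN_ge0.
rewrite {1}(matrix_sum_delta x) big_ord1; apply: le_trans (normN_sum_le _) _.
rewrite mulrC mulr_sumr; apply: ler_sum => j _.
by rewrite NZ ler_wpM2r ?normN_ge0 ?mx_coord_le_norm.
Qed.

Lemma continuous_normN : continuous N.
Proof.
have [C C0 NC] := normN_le_mx_norm; case: normN => _ _ ND.
move=> x; apply/(@cvgrPdist_le _ _ _ (nbhs x) (nbhs_filter x)) => /= e e0.
apply/nbhs_ballP.
exists (e / (C + 1)) => /=; first by rewrite divr_gt0 // ltr_wpDl.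
move=> y; rewrite -ball_normE /= => xy_small.
have Nxy : N (x - y) <= e.
  apply: le_trans (NC _) _; apply: le_trans (_ : C * (e / (C + 1)) <= _).
    by rewrite ler_wpM2l // ltW.
  by rewrite mulrA ler_pdivrMr ?ltr_wpDl //; nra.
rewrite ler_norml; apply/andP; split.
  by have := ND (y - x) x; rewrite subrK distN_sym; lra.
by have := ND (x - y) y; rewrite subrK; lra.
Qed.

(* [c] is the minimum of [N] on the compact unit sphere of the max-norm. *)
Lemma mx_norm_le_normN : exists2 c, 0 < c & forall x, c * `|x| <= N x.
Proof.
case: (pselect (exists v : 'rV[R]_d, v != 0)) => [[v v0]|]; last first.
  move=> all0; exists 1 => // x; have -> : x = 0.
    by apply/eqP/negPn/negP => x0; apply: all0; exists x.
  by rewrite normr0 mulr0 normN0.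
case: normN => _ NZ _.
pose S := [set x : 'rV[R]_d | `|x| = 1].
have S_normalize x : x != 0 -> S (`|x|^-1 *: x).
  by move=> x0; rewrite /S /= normrZ ger0_norm ?invr_ge0 // mulVf // normr_eq0.
have S0 : S !=set0 by exists (`|v|^-1 *: v); exact: S_normalize.
have cS : compact S.
  apply: bounded_closed_compact.
    by exists 1; split; [rewrite num_real | move=> M M1 x Sx; rewrite /= Sx ltW].
  rewrite (_ : S = (@Num.norm _ _) @^-1` [set 1]) //.
  by apply: (proj1 (continuous_closedP _) (@norm_continuous _ _)); exact: closed_eq.
have [u Su minu] := EVT_min_rV S0 cS (continuous_subspaceT continuous_normN).
have Nu_gt0 : 0 < N u.
  apply: normN_gt0; move: Su; rewrite in_setE /S /=.
  by apply: contra_eqN => /eqP ->; rewrite normr0 eq_sym oner_eq0.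
exists (N u) => // x; have [->|x0] := eqVneq x 0; first by rewrite normr0 mulr0 normN0.
have := minu _ (mem_set (S_normalize x x0)).
by rewrite NZ ger0_norm ?invr_ge0 // mulrC ler_pdivlMr ?normr_gt0.
Qed.

End NormEquivalence.

Lemma box_vol0 (R : realType) d (a : 'rV[R]_d) : (0 < d)%N -> box_vol a a = 0.
Proof.
move=> d_gt0; rewrite /box_vol (eq_bigr (fun=> 0)) => [|i _]; last by rewrite subrr maxxx.
by rewrite prodr_const card_ord expr0n gtn_eqF.
Qed.

Lemma lebesgue_outer_le_cubes (R : realType) d (A : set 'rV[R]_d)
    (c : nat -> 'rV[R]_d) n t :
  (0 < d)%N -> 0 <= t ->
  (forall x, A x -> exists2 i, (i < n)%N & `|x - c i| <= t) ->
  (lebesgue_outer A <= (n%:R * (2 * t) ^+ d)%:E)%E.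
Proof.
move=> d_gt0 t0 Acover.
pose a k := if (k < n)%N then c k - const_mx t else 0.
pose b k := if (k < n)%N then c k + const_mx t else 0.
have vol_ab k : (k < n)%N -> box_vol (a k) (b k) = (2 * t) ^+ d.
  move=> kn; rewrite /a /b kn /box_vol (eq_bigr (fun=> 2 * t)) ?prodr_const ?card_ord //.
  by move=> i _; rewrite !mxE max_l; [ring | lra].
apply: (@le_trans _ _ (\sum_(0 <= k <oo) (box_vol (a k) (b k))%:E)%E).
  apply: ereal_inf_lbound; exists a, b; split => // x /Acover [i ni xci].
  exists i => //; rewrite /box /a /b ni => j; rewrite !mxE.
  have := le_trans (mx_coord_le_norm (x - c i) 0 j) xci.
  by rewrite !mxE ler_norml => /andP[? ?]; apply/andP; split; lra.
rewrite (nneseries_split 0 n) => [|k _]; last first.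
  by rewrite lee_fin /box_vol; apply: prodr_ge0 => i _; rewrite le_max lexx orbT.
rewrite eseries0 => [|k]; last first.
  by rewrite add0n /a /b => nk _; rewrite ltnNge nk box_vol0.
rewrite adde0 sumEFin lee_fin add0n (eq_big_nat _ _ (F2 := fun=> (2 * t) ^+ d));
  last by move=> k /andP[_ /vol_ab].
by rewrite sumr_const_nat subn0 [leRHS]mulr_natl.
Qed.

Lemma le_geometric_tail (R : realFieldType) (u : nat -> R) (rho : R) n0 :
  0 < rho -> (forall n, (n0 <= n)%N -> u n.+1 <= rho * u n) ->
  forall n, (n0 <= n)%N -> u n <= u n0 / rho ^+ n0 * rho ^+ n.
Proof.
move=> rho_gt0 u_step.
have u_n0 : u n0 <= u n0 / rho ^+ n0 * rho ^+ n0.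
  by rewrite divfK ?lexx // expf_neq0 // gt_eqF.
elim=> [|n IH]; rewrite leq_eqVlt => /predU1P[<-|] //.
move=> n0n; apply: le_trans (u_step _ n0n) _.
by rewrite exprS mulrCA; apply: ler_wpM2l; [exact: ltW | exact: IH].
Qed.

(* The [i = 1] term of the binomial expansion of [(s + (1 - s)) ^+ n.+1 = 1]. *)
Lemma natmul_expr_le (R : numDomainType) (s : R) n : 0 <= s <= 1 ->
  n.+1%:R * s ^+ n * (1 - s) <= 1.
Proof.
case/andP => s_ge0 s_le1.
apply: (@le_trans _ _ ((s + (1 - s)) ^+ n.+1)); last by rewrite addrC subrK expr1n.
rewrite exprDn (bigD1 (inord 1)) ?inordK // subn1 expr1 bin1 /=.
rewrite -[leLHS]mulrA [leLHS]mulr_natl lerDl.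
by apply: sumr_ge0 => i _; rewrite mulrn_wge0 // mulr_ge0 ?exprn_ge0 ?subr_ge0.
Qed.

Lemma cvg_natmul_expr (R : archiRealFieldType) (z : R) :
  `|z| < 1 -> (fun n => n%:R * z ^+ n) @ \oo --> 0.
Proof.
move=> z_lt1; pose s := (1 + `|z|) / 2.
have s_ge0 : 0 <= s by rewrite /s; have := normr_ge0 z; lra.
have s_lt1 : s < 1 by rewrite /s; lra.
have s01 : 0 <= s <= 1 by rewrite s_ge0 ltW.
have z_le_s2 : `|z| <= s * s by rewrite /s; have := normr_ge0 z; nra.
apply/norm_cvg0P; apply: (squeeze_cvgr (f := cst 0) (h := fun n => (1 - s)^-1 * s ^+ n)).
- apply: nearW => n; rewrite normr_ge0 /= normrM normrX ger0_norm //.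
  apply: le_trans (_ : n%:R * (s ^+ n * s ^+ n) <= _).
    by apply: ler_wpM2l => //; rewrite -exprMn lerXn2r ?nnegrE ?mulr_ge0.
  rewrite mulrA mulrC ler_pdivlMl ?subr_gt0 //.
  have := natmul_expr_le n s01; rewrite -natr1.
  have := exprn_ge0 n s_ge0; have : 0 <= n%:R :> R by []; nra.
- exact: cvg_cst.
- by rewrite -(mulr0 (1 - s)^-1); apply: cvgMr; apply: cvg_expr; rewrite ger0_norm.
Qed.

Lemma limn_esup_ge (R : realType) (u : R^nat) (a : R) :
  (forall n0 r, r < a -> exists2 k, (n0 <= k)%N & r < u k) ->
  (a%:E <= limn_esup (fun n => (u n)%:E))%E.
Proof.
move=> u_freq; rewrite limn_esup_lim; apply: lime_ge; first exact: is_cvg_esups.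
apply: nearW => n; rewrite /esups /= leNgt; apply/negP => sup_lt.
have u_le k : (n <= k)%N -> ((u k)%:E <= ereal_sup (sdrop (fun n => (u n)%:E) n))%E.
  by move=> nk; apply: ereal_sup_ubound; exists k.
move: sup_lt u_le; case: ereal_sup => [s| |] //= sup_lt u_le.
- have [k nk] := u_freq n s sup_lt; apply/negP; rewrite -leNgt -lee_fin.
  exact: u_le.
- by have := u_le n (leqnn n).
Qed.

Section Design.
Variables (R : realType) (d : nat) (N : 'rV[R]_d -> R) (X : set 'rV[R]_d)
  (xs : nat -> 'rV[R]_d).
Hypotheses (normN : is_norm N) (cX : compact X) (X_xs : forall n, X (xs n))
  (xs_inj : forall m n, m <> n -> xs m <> xs n) (X_pos : (0 < lebesgue_outer X)%E).

Local Notation dist_design := (dist_design N xs).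
Local Notation fill_distance := (fill_distance N X xs).
Local Notation separation_radius := (separation_radius N xs).
Local Notation mesh_ratio := (mesh_ratio N X xs).

Lemma dist_design_ge0 n x : 0 <= dist_design n x.
Proof. by apply: le_bigmin => [|i _]; exact: normN_ge0. Qed.

Lemma dist_design_attained n x : (0 < n)%N ->
  exists2 i, (i < n)%N & dist_design n x = N (x - xs i).
Proof.
case: n => // n _.
have [i _ i_min] := @arg_minP _ _ _ (ord0 : 'I_n.+1) xpredT (fun i => N (x - xs i)) isT.
exists i => //; apply/eqP; rewrite eq_le bigmin_le /=.
by apply: le_bigmin => [|j _]; [exact: (i_min ord0) | exact: i_min].
Qed.

Lemma dist_design_le_first n x : dist_design n x <= N (x - xs 0).
Proof. exact: bigmin_le_id. Qed.

Lemma has_sup_dist_design n : has_sup [set dist_design n x | x in X].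
Proof.
split; first by exists (dist_design n (xs 0)), (xs 0).
have [C C0 NC] := normN_le_mx_norm normN.
have [M [_ XM]] := compact_bounded cX.
exists (C * (`|M| + 1 + `|xs 0|)) => _ [x Xx <-].
apply: le_trans (dist_design_le_first n x) _; apply: le_trans (NC _) _.
rewrite ler_wpM2l //; apply: le_trans (ler_normB _ _) _; rewrite lerD2r.
by apply: XM Xx; have := real_ler_norm (num_real M); lra.
Qed.

Lemma dist_design_le_fill_distance n x : X x -> dist_design n x <= fill_distance n.
Proof. by move=> Xx; apply: sup_upper_bound; [exact: has_sup_dist_design | exists x]. Qed.

Lemma fill_distance_ge0 n : 0 <= fill_distance n.
Proof. exact: le_trans (dist_design_ge0 n (xs 0)) (dist_design_le_fill_distance n (X_xs 0)). Qed.

Lemma dist_xs_gt0 i j : i <> j -> 0 < N (xs i - xs j).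
Proof. by move=> ij; apply: (normN_gt0 normN); rewrite subr_eq0; apply/eqP; exact: xs_inj. Qed.

Lemma separation_radius_gt0 n : 0 < separation_radius n.
Proof.
have N01 : 0 < N (xs 0 - xs 1) by exact: dist_xs_gt0.
rewrite mulr_gt0 ?invr_gt0 //; apply: lt_bigmin => // i _; apply: lt_bigmin => // j ij.
by apply: dist_xs_gt0 => /val_inj/eqP; rewrite (negbTE ij).
Qed.

Lemma separation_radius_le n i j : (i < n)%N -> (j < n)%N -> i <> j ->
  separation_radius n <= 2^-1 * N (xs i - xs j).
Proof.
move=> ni nj ij; rewrite ler_wpM2l ?invr_ge0 //.
apply: (bigmin_inf (Ordinal ni)) => //; apply: (bigmin_inf (Ordinal nj)) => //.
by apply/eqP => /(congr1 val).
Qed.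

(* The new point [xs n] lies within the fill distance of the first [n] points. *)
Lemma separation_radius_succ_le n : (0 < n)%N ->
  separation_radius n.+1 <= 2^-1 * fill_distance n.
Proof.
move=> n_gt0; have [i ni dist_i] := dist_design_attained (xs n) n_gt0.
apply: le_trans (separation_radius_le (ltnSn n) (ltnW ni) _) _.
  by move=> in_; move: ni; rewrite in_ ltnn.
by rewrite ler_wpM2l ?invr_ge0 // -dist_i dist_design_le_fill_distance.
Qed.

Lemma fill_distance_succ_le n r : (0 < n)%N -> mesh_ratio n.+1 <= r ->
  fill_distance n.+1 <= r / 2 * fill_distance n.
Proof.
move=> n_gt0; have q_gt0 := separation_radius_gt0 n.+1.
rewrite /mesh_ratio ler_pdivrMr // => h_le.
have := separation_radius_succ_le n_gt0.
have := fill_distance_ge0 n; have := fill_distance_ge0 n.+1; nra.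
Qed.

Lemma lebesgue_outer_le_fill_distance c n : 0 < c -> (forall x, c * `|x| <= N x) ->
  (0 < d)%N -> (0 < n)%N ->
  (lebesgue_outer X <= (n%:R * (2 * (fill_distance n / c)) ^+ d)%:E)%E.
Proof.
move=> c_gt0 cN d_gt0 n_gt0; apply: (lebesgue_outer_le_cubes (c := xs)) => //.
  by rewrite divr_ge0 ?fill_distance_ge0 ?ltW.
move=> x Xx; have [i ni dist_i] := dist_design_attained x n_gt0.
exists i; rewrite // ler_pdivlMr // mulrC; apply: le_trans (cN _) _.
by rewrite -dist_i dist_design_le_fill_distance.
Qed.

Lemma dim_gt0 : (0 < d)%N.
Proof.
rewrite lt0n; apply/eqP => d0; apply: (xs_inj (m := 0) (n := 1)) => //.
apply/rowP => j; exfalso; have := ltn_ord j; move: (nat_of_ord j) => i.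
by rewrite d0.
Qed.

Lemma fill_distance_not_geometric C rho n1 : 0 < rho < 1 ->
  ~ (forall k, (n1 <= k)%N -> fill_distance k <= C * rho ^+ k).
Proof.
case/andP => rho_gt0 rho_lt1 h_geo.
have [c c_gt0 cN] := mx_norm_le_normN normN.
have C_ge0 : 0 <= C.
  have := h_geo _ (leqnn n1); have := fill_distance_ge0 n1.
  by have := exprn_gt0 n1 rho_gt0; nra.
have Cc_ge0 : 0 <= 2 * (C / c) by rewrite mulr_ge0 // divr_ge0 // ltW.
pose K := (2 * (C / c)) ^+ d.
have L_le k : (n1 < k)%N -> (lebesgue_outer X <= (K * (k%:R * rho ^+ k))%:E)%E.
  move=> n1k; have k_gt0 : (0 < k)%N by exact: leq_ltn_trans n1k.
  apply: le_trans (lebesgue_outer_le_fill_distance c_gt0 cN dim_gt0 k_gt0) _.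
  rewrite lee_fin [leRHS]mulrCA; apply: ler_wpM2l => //.
  apply: le_trans (_ : (2 * (C / c) * rho ^+ k) ^+ d <= _).
    apply: lerXn2r.
    - by rewrite nnegrE mulr_ge0 // divr_ge0 ?fill_distance_ge0 ?ltW.
    - by rewrite nnegrE mulr_ge0 // exprn_ge0 ?ltW.
    rewrite -mulrA; apply: ler_wpM2l => //; rewrite mulrAC.
    by apply: ler_wpM2r; [rewrite invr_ge0 ltW | exact/h_geo/ltnW].
  rewrite exprMn; apply: ler_wpM2l; first exact: exprn_ge0.
  by rewrite ler_iXnr ?dim_gt0 ?exprn_ge0 ?exprn_ile1 ?ltW.
have K_lim : (fun k => K * (k%:R * rho ^+ k)) @ \oo --> 0.
  by rewrite -(mulr0 K); apply: cvgMr; apply: cvg_natmul_expr; rewrite ger0_norm ?ltW.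
move: X_pos L_le; case: lebesgue_outer => [l| |] //; last by move=> _ /(_ _ (ltnSn _)).
rewrite lte_fin => l_gt0 L_le.
have [k [n1k Kk_lt]] := filter_ex (filterI (nbhs_infty_ge n1.+1) (cvgr_lt 0 K_lim l l_gt0)).
by have := L_le k n1k; rewrite lee_fin leNgt Kk_lt.
Qed.

Lemma mesh_ratio_frequently_gt n0 r : r < 2 ->
  exists2 k, (n0 <= k)%N & r < mesh_ratio k.
Proof.
move=> r_lt2; apply: contrapT => MR_small.
have MR_le k : (n0 <= k)%N -> mesh_ratio k <= r.
  by move=> n0k; rewrite leNgt; apply/negP => r_lt; apply: MR_small; exists k.
pose rho := Num.max (r / 2) 2^-1.
have rho_gt0 : 0 < rho by rewrite lt_max invr_gt0 ltr0n orbT.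
have rho_lt1 : rho < 1 by rewrite gt_max; apply/andP; split; lra.
have h_step k : (n0.+1 <= k)%N -> fill_distance k.+1 <= rho * fill_distance k.
  move=> n0k; have k_gt0 : (0 < k)%N by exact: leq_trans n0k.
  apply: le_trans (fill_distance_succ_le k_gt0 (MR_le _ _)) _; first exact: leqW (ltnW n0k).
  by rewrite ler_wpM2r ?fill_distance_ge0 // le_max lexx.
apply: (@fill_distance_not_geometric _ rho n0.+1); first by rewrite rho_gt0.
exact: le_geometric_tail h_step.
Qed.

End Design.

Theorem theorem1 (R : realType) (d : nat) (X : set 'rV[R]_d)
  (N : 'rV[R]_d -> R) (xs : nat -> 'rV[R]_d) :
  compact X ->
  (0 < lebesgue_outer X)%E ->
  is_norm N ->
  (forall n, X (xs n)) ->
  (forall m n, m <> n -> xs m <> xs n) ->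
  (2%:E <= limn_esup (fun n => (mesh_ratio N X xs n)%:E))%E.
Proof.
move=> cX X_pos normN X_xs xs_inj; apply: limn_esup_ge => n0 r r_lt2.
exact: mesh_ratio_frequently_gt.
Qed.
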